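(* Let $n>p$ be positive integers, $A\in\operatorname{Skew}(p)$ and $H\in\mathbb{R}^{(n-p)\times p}$. Then \[ \begin{pmatrix} I_p & A\\ 0 & H\end{pmatrix}\exp_m\begin{pmatrix} A & A^2-H^TH\\ I_p & A\end{pmatrix}\begin{pmatrix} I_p\\ 0\end{pmatrix}=\exp_m\begin{pmatrix} 2A & -H^T\\ H & 0\end{pmatrix}\begin{pmatrix} I_p\\ 0\end{pmatrix}. \]
   Context: $\operatorname{Skew}(p)$ denotes the real skew-symmetric $p\times p$ matrices and $\exp_m$ the matrix exponential. *)

From HB Require Import structures.
From mathcomp Require Import all_boot all_order all_algebra.
From mathcomp Require Import all_classical all_reals all_analysis.
Set Implicit Arguments. Unset Strict Implicit. Unset Printing Implicit Defensive.
Import Order.TTheory GRing.Theory Num.Theory.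
Import numFieldNormedType.Exports.
Local Open Scope ring_scope.

Definition mexp (R : realType) (k : nat) (M : 'M[R]_k) : 'M[R]_k :=
  limn (series (fun i : nat => (i`!%:R)^-1 *: (M ^+ i))).

Definition skew_symmetric (R : realType) (k : nat) (A : 'M[R]_k) : Prop := trmx A = - A.

(** The block matrix [L = [[1, A], [0, H]]] intertwines the two exponents:
    [L M = N L] for [M = [[A, A^2 - H^T H], [1, A]]] and
    [N = [[2A, -H^T], [H, 0]]].  Hence [L M^i = N^i L] for every [i], and
    passing to the limit in the exponential series (matrix multiplication is
    continuous) gives [L exp_m(M) = exp_m(N) L].  Finally [L] maps the first
    [p] columns of the identity onto the first [p] columns of the identity. *)

From HB Require Import structures.
From mathcomp Require Import all_boot all_order all_algebra.
From mathcomp Require Import all_classical all_reals all_analysis.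
Import Order.TTheory GRing.Theory Num.Theory.
Import numFieldNormedType.Exports.
Local Open Scope ring_scope.
Local Open Scope classical_set_scope.

HB.instance Definition _ (R : realType) (m n : nat) := Complete.on 'M[R]_(m, n).

Section MatrixNorm.
Context {R : realType}.

Lemma normr_mx_entry_le {m n} (M : 'M[R]_(m, n)) i j : `|M i j| <= `|M|.
Proof.
rewrite [leRHS]/Num.Def.normr /= mx_normrE.
exact: le_trans (le_bigmax _ _ (i, j)).
Qed.

Lemma normr_mx_le {m n} (M : 'M[R]_(m, n)) c :
  0 <= c -> (forall i j, `|M i j| <= c) -> `|M| <= c.
Proof.
move=> c_ge0 M_le; rewrite /Num.Def.normr /= mx_normrE.
by rewrite (bigmax_le _ c_ge0) // => -[i j] _.
Qed.

(* [`|M|] is the entrywise max norm, hence the factor [k]. *)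
Lemma normr_mulmx_le {m k n} (A : 'M[R]_(m, k)) (B : 'M[R]_(k, n)) :
  `|A *m B| <= k%:R * `|A| * `|B|.
Proof.
apply: normr_mx_le => [|i j]; first by rewrite !mulr_ge0.
rewrite mxE; apply: le_trans (ler_norm_sum _ _ _) _.
apply: le_trans (_ : \sum_(l < k) `|A| * `|B| <= _).
  by apply: ler_sum => l _; rewrite normrM ler_pM ?normr_mx_entry_le.
by rewrite sumr_const card_ord -mulrA mulr_natl.
Qed.

Lemma normr_mx_exp_le {k} (M : 'M[R]_k) i : `|M ^+ i| <= (k%:R * `|M|) ^+ i.
Proof.
elim: i => [|i IHi].
  rewrite expr0; apply: normr_mx_le => // a b.
  by rewrite [1]/(1%:M) mxE; case: (a == b); rewrite ?normr1 ?normr0.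
rewrite !exprS -mulmxE; apply: le_trans (normr_mulmx_le _ _) _.
by rewrite ler_wpM2l ?mulr_ge0.
Qed.

Lemma mulmx_continuous {m k n} (L : 'M[R]_(m, k)) :
  continuous (mulmx L : 'M[R]_(k, n) -> 'M[R]_(m, n)).
Proof.
apply/bounded_linear_continuous/bounded_funP => r.
exists (k%:R * `|L| * r) => X X_le; apply: le_trans (normr_mulmx_le _ _) _.
by rewrite ler_wpM2l ?mulr_ge0.
Qed.

Lemma mulmxr_continuous {m k n} (E : 'M[R]_(k, n)) :
  continuous (mulmxr E : 'M[R]_(m, k) -> 'M[R]_(m, n)).
Proof.
apply/bounded_linear_continuous/bounded_funP => r.
exists (k%:R * r * `|E|) => X X_le; apply: le_trans (normr_mulmx_le _ _) _.
by rewrite ler_wpM2r // ler_wpM2l.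
Qed.

End MatrixNorm.

Definition mexp_term {R : realType} {k} (M : 'M[R]_k) (i : nat) : 'M[R]_k :=
  (i`!%:R)^-1 *: M ^+ i.

Lemma mexp_cvg {R : realType} {k} (M : 'M[R]_k) : cvgn (series (mexp_term M)).
Proof.
apply: normed_cvg.
apply: (series_le_cvg _ _ _ (is_cvg_series_exp_coeff (k%:R * `|M|))).
- by move=> i; exact: normr_ge0.
- by move=> i; apply: exp_coeff_ge0; rewrite mulr_ge0.
- move=> i; rewrite /exp_coeff /mexp_term /= normrZ mulrC.
  by rewrite ger0_norm ?invr_ge0 // ler_wpM2r ?invr_ge0 ?normr_mx_exp_le.
Qed.

Lemma mulmx_exp_intertwine {R : pzRingType} {m k} {L : 'M[R]_(m, k)} {M N} :
  L *m M = N *m L -> forall i, L *m M ^+ i = N ^+ i *m L.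
Proof.
move=> LMN; elim=> [|i IHi]; first by rewrite !expr0 mulmx1 mul1mx.
by rewrite !exprSr -!mulmxE mulmxA IHi -mulmxA LMN mulmxA.
Qed.

Lemma mexp_intertwine {R : realType} {m k} {L : 'M[R]_(m, k)} {M N} :
  L *m M = N *m L -> L *m mexp M = mexp N *m L.
Proof.
move=> LMN.
have series_intertwine :
    (fun j => L *m series (mexp_term M) j)
    = (fun j => series (mexp_term N) j *m L).
  apply: funext => j; rewrite /series /= mulmx_sumr mulmx_suml.
  apply: eq_bigr => i _.
  by rewrite /mexp_term -scalemxAl -scalemxAr (mulmx_exp_intertwine LMN).
have /(cvg_lim (@norm_hausdorff _ _)) <- :
    (fun j => L *m series (mexp_term M) j) @ \oo --> L *m mexp M.
  exact: (continuous_cvg _ (mulmx_continuous L _) (mexp_cvg M)).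
have /(cvg_lim (@norm_hausdorff _ _)) <- :
    (fun j => series (mexp_term N) j *m L) @ \oo --> mexp N *m L.
  exact: (continuous_cvg _ (mulmxr_continuous L _) (mexp_cvg N)).
by rewrite series_intertwine.
Qed.

Lemma block_mx_intertwine {R : pzRingType} {p q}
    (A : 'M[R]_p) (H : 'M[R]_(q, p)) :
  block_mx 1%:M A 0 H *m block_mx A (A *m A - H^T *m H) 1%:M A
  = block_mx (2%:R *: A) (- H^T) H 0 *m block_mx 1%:M A 0 H.
Proof.
rewrite !mulmx_block !mul1mx !mulmx1 !mul0mx !mulmx0 !add0r !addr0.
rewrite -!scalemxAl mulNmx scaler_nat mulr2n; congr block_mx.
by rewrite addrAC -[2%:R]/(1 + 1) scalerDl scale1r.
Qed.

Theorem lemma3p2 (R : realType) (n p : nat) (hp : (0 < p)%N) (hnp : (p < n)%N)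
  (A : 'M[R]_p) (H : 'M[R]_(n - p, p)) (hA : skew_symmetric A) :
  block_mx 1%:M A 0 H
    *m mexp (block_mx A (A *m A - (trmx H) *m H) 1%:M A)
    *m col_mx (1%:M : 'M[R]_p) (0 : 'M[R]_(p, p))
  = mexp (block_mx (2%:R *: A) (- (trmx H)) H (0 : 'M[R]_(n - p)))
    *m col_mx (1%:M : 'M[R]_p) (0 : 'M[R]_(n - p, p)).
Proof.
rewrite (mexp_intertwine (block_mx_intertwine A H)) -mulmxA.
by rewrite mul_block_col !mul1mx !mulmx0 !mul0mx addr0 add0r.
Qed.
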